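(* Let $M=(W,\bm{\Box},V)$ be a monotonic and transitive neighborhood model, $\Sigma$ a set of formulas closed under subformulas, and $M^{T}_f$ the transitive filtration of $M$ through $\Sigma$. Then its supplementation $M^{T\#}_f=(W_f,\bm{\Box}^{T\#}_f,V_f)$ is a filtration of $M$ through $\Sigma$, i.e. $\bm{\Box}^{T\#}_f\widetilde{|\varphi|}_M=\widetilde{|\Box\varphi|}_M$ for every formula $\Box\varphi\in\Sigma$.
   Context: A neighborhood model is $M=(W,\bm{\Box},V)$ with $W\neq\varnothing$, $\bm{\Box}:\mathcal P(W)\to\mathcal P(W)$, $V:Var\to\mathcal P(W)$; truth sets: $|p|_M=V(p)$, $|\neg\varphi|_M=W\setminus|\varphi|_M$, $|\varphi\wedge\psi|_M=|\varphi|_M\cap|\psi|_M$, $|\Box\varphi|_M=\bm{\Box}|\varphi|_M$. $M$ is transitive if $\bm{\Box}X\subseteq\bm{\Box}\bm{\Box}X$ for all $X$, monotonic if $X\subseteq Y$ implies $\bm{\Box}X\subseteq\bm{\Box}Y$. For $\Sigma$ closed under subformulas, $w\sim v$ iff $w,v$ satisfy the same formulas of $\Sigma$; $\widetilde w$ is the class of $w$, $W_f=\{\widetilde w:w\in W\}$, $\widetilde X=\{\widetilde w:w\in X\}$, $V_f(p)=\widetilde{|p|}_M$. A filtration of $M$ through $\Sigma$ is a model $(W_f,\bm{\Box}_f,V_f)$ with $\bm{\Box}_f\widetilde{|\varphi|}_M=\widetilde{|\Box\varphi|}_M$ whenever $\Box\varphi\in\Sigma$. The minimal filtration has $\bm{\Box}^{-}_fX=\widetilde{|\Box\varphi|}_M$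 if $X=\widetilde{|\varphi|}_M$ for some formula $\Box\varphi\in\Sigma$, and $\varnothing$ otherwise. For a function $\bm{\Box}':\mathcal P(U)\to\mathcal P(U)$, $\widehat{\bm{\Box}'}X=X$ if $X=\bm{\Box}'Y$ for some $Y$, and $\varnothing$ otherwise. The transitive filtration has $\bm{\Box}^{T}_fX=\bm{\Box}^{-}_fX\cup\widehat{\bm{\Box}^{-}_f}X$. The supplementation of a function $\bm{\Box}'$ is $\bm{\Box}'^{\#}X=\bigcup\{\bm{\Box}'Y:Y\subseteq X\}$; $\bm{\Box}^{T\#}_f$ denotes the supplementation of $\bm{\Box}^{T}_f$. *)

Set Implicit Arguments.

Inductive form : Type :=
| Var : nat -> form
| Neg : form -> form
| And : form -> form -> form
| Box : form -> form.

Record nbhd_model := NbhdModel {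
  W : Type;
  nbox : (W -> Prop) -> (W -> Prop);
  val : nat -> (W -> Prop);
  W_nonempty : inhabited W }.

Definition subset {T : Type} (X Y : T -> Prop) : Prop := forall x, X x -> Y x.

Definition monotonic (M : nbhd_model) : Prop :=
  forall X Y : W M -> Prop, subset X Y -> subset (nbox M X) (nbox M Y).

Definition transitive (M : nbhd_model) : Prop :=
  forall X : W M -> Prop, subset (nbox M X) (nbox M (nbox M X)).

Fixpoint truth (M : nbhd_model) (phi : form) : W M -> Prop :=
  match phi with
  | Var p => val M p
  | Neg a => fun w => ~ truth M a w
  | And a b => fun w => truth M a w /\ truth M b w
  | Box a => nbox M (truth M a)
  end.

Definition subformula_closed (Sigma : form -> Prop) : Prop :=
  (forall a, Sigma (Neg a) -> Sigma a) /\
  (forall a b, Sigma (And a b) -> Sigma a /\ Sigma b) /\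
  (forall a, Sigma (Box a) -> Sigma a).

Section Filtration.
Variables (M : nbhd_model) (Sigma : form -> Prop).

Definition sim (w v : W M) : Prop :=
  forall phi, Sigma phi -> (truth M phi w <-> truth M phi v).

Definition cls (w : W M) : W M -> Prop := sim w.

Definition Wf : Type := { C : W M -> Prop | exists w, C = cls w }.

Definition tilde (X : W M -> Prop) : Wf -> Prop :=
  fun c => exists w, X w /\ proj1_sig c = cls w.

Definition Vf (p : nat) : Wf -> Prop := tilde (val M p).

(* minimal filtration: Box^-_f X = |Box phi|~ if X = |phi|~ for some Box phi in
   Sigma, empty otherwise (the value does not depend on the choice of phi). *)
Definition boxMin (X : Wf -> Prop) : Wf -> Prop :=
  fun c => exists phi, Sigma (Box phi) /\ X = tilde (truth M phi) /\
                       tilde (truth M (Box phi)) c.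

(* a filtration of M through Sigma (valuation V_f fixed as above) *)
Definition is_filtration (bf : (Wf -> Prop) -> (Wf -> Prop)) : Prop :=
  forall phi, Sigma (Box phi) -> bf (tilde (truth M phi)) = tilde (truth M (Box phi)).

End Filtration.

Definition hat {U : Type} (B' : (U -> Prop) -> (U -> Prop)) (X : U -> Prop) : U -> Prop :=
  fun u => (exists Y, X = B' Y) /\ X u.

Definition supplementation {U : Type} (B' : (U -> Prop) -> (U -> Prop)) (X : U -> Prop)
  : U -> Prop :=
  fun u => exists Y, subset Y X /\ B' Y u.

Definition boxT (M : nbhd_model) (Sigma : form -> Prop) (X : Wf M Sigma -> Prop)
  : Wf M Sigma -> Prop :=
  fun c => @boxMin M Sigma X c \/ hat (@boxMin M Sigma) X c.

(** Supplementation only enlarges Box^T_f |φ|~, which already contains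
    |□φ|~, so it suffices that Box^T_f Y ⊆ |□φ|~ whenever Y ⊆ |φ|~.  The key
    fact is that X~ ⊆ |φ|~ forces X ⊆ |φ| when φ ∈ Σ.  If Y = |ψ|~ (minimal
    part), then |ψ| ⊆ |φ| and monotonicity gives |□ψ| ⊆ |□φ|.  If Y = |□χ|~
    (hat part), then |□χ| ⊆ |φ|, and transitivity followed by monotonicity
    gives |□χ| ⊆ |□□χ| ⊆ |□φ|. *)

From Stdlib Require Import FunctionalExtensionality PropExtensionality.

Lemma subset_refl {T : Type} (X : T -> Prop) : subset X X.
Proof. now intros x. Qed.

Lemma subset_trans {T : Type} {X Y Z : T -> Prop} :
  subset X Y -> subset Y Z -> subset X Z.
Proof. intros HXY HYZ x Hx; exact (HYZ x (HXY x Hx)). Qed.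

Lemma subset_antisym {T : Type} (X Y : T -> Prop) :
  subset X Y -> subset Y X -> X = Y.
Proof.
  intros HXY HYX; apply functional_extensionality; intro x.
  apply propositional_extensionality; split; [apply HXY | apply HYX].
Qed.

Lemma supplementation_extensive {U : Type} (B : (U -> Prop) -> U -> Prop)
    (X : U -> Prop) :
  subset (B X) (supplementation B X).
Proof. intros u Hu; exists X; split; [apply subset_refl | exact Hu]. Qed.

Lemma supplementation_least {U : Type} (B : (U -> Prop) -> U -> Prop)
    (X Z : U -> Prop) :
  (forall Y, subset Y X -> subset (B Y) Z) -> subset (supplementation B X) Z.
Proof. intros HB u [Y [HYX Hu]]; exact (HB Y HYX u Hu). Qed.

Section Filtration.
Variables (M : nbhd_model) (Sigma : form -> Prop).

Let tilde := @tilde M Sigma.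
Let boxMin := @boxMin M Sigma.

Lemma tilde_mono {X Y : W M -> Prop} : subset X Y -> subset (tilde X) (tilde Y).
Proof. intros HXY c [w [Hw Hc]]; exists w; split; [exact (HXY w Hw) | exact Hc]. Qed.

Definition class_of (w : W M) : Wf M Sigma :=
  exist _ (@cls M Sigma w) (ex_intro _ w eq_refl).

Lemma sim_refl (w : W M) : @sim M Sigma w w.
Proof. intros phi _; tauto. Qed.

Lemma tilde_class_of {X : W M -> Prop} {w : W M} : X w -> tilde X (class_of w).
Proof. intros Hw; exists w; split; [exact Hw | reflexivity]. Qed.

Lemma tilde_subset_truth {X : W M -> Prop} {phi : form} :
  Sigma phi -> subset (tilde X) (tilde (truth M phi)) -> subset X (truth M phi).
Proof.
  intros Hphi HX w Hw.
  destruct (HX _ (tilde_class_of Hw)) as [v [Hv Hwv]].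
  assert (Hvw : @sim M Sigma v w)
    by (change (@cls M Sigma v w); rewrite <- Hwv; apply sim_refl).
  exact (proj1 (Hvw phi Hphi) Hv).
Qed.

Lemma tilde_box_subset_boxMin {phi : form} :
  Sigma (Box phi) -> subset (tilde (truth M (Box phi))) (boxMin (tilde (truth M phi))).
Proof. intros Hphi c Hc; exists phi; auto. Qed.

Hypothesis M_monotonic : monotonic M.
Hypothesis M_transitive : transitive M.

Lemma boxMin_subset_tilde_box {Y : Wf M Sigma -> Prop} {phi : form} :
  Sigma phi -> subset Y (tilde (truth M phi)) ->
  subset (boxMin Y) (tilde (truth M (Box phi))).
Proof.
  intros Hphi HY c [psi [_ [-> Hc]]].
  assert (Hpsi_phi : subset (truth M psi) (truth M phi))
    by exact (tilde_subset_truth Hphi HY).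
  exact (tilde_mono (M_monotonic _ _ Hpsi_phi) c Hc).
Qed.

Lemma hat_boxMin_subset_tilde_box {Y : Wf M Sigma -> Prop} {phi : form} :
  Sigma phi -> subset Y (tilde (truth M phi)) ->
  subset (hat boxMin Y) (tilde (truth M (Box phi))).
Proof.
  intros Hphi HY c [[Z ->] [chi [Hchi [-> Hc]]]].
  assert (Hbox_chi_phi : subset (truth M (Box chi)) (truth M phi)).
  { apply (tilde_subset_truth Hphi).
    exact (subset_trans (tilde_box_subset_boxMin Hchi) HY). }
  assert (Hbox_chi_box_phi : subset (truth M (Box chi)) (truth M (Box phi)))
    by exact (subset_trans (M_transitive _) (M_monotonic _ _ Hbox_chi_phi)).
  exact (tilde_mono Hbox_chi_box_phi c Hc).
Qed.

Lemma boxT_subset_tilde_box {Y : Wf M Sigma -> Prop} {phi : form} :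
  Sigma phi -> subset Y (tilde (truth M phi)) ->
  subset (boxT Y) (tilde (truth M (Box phi))).
Proof.
  intros Hphi HY c [Hc | Hc].
  - exact (boxMin_subset_tilde_box Hphi HY c Hc).
  - exact (hat_boxMin_subset_tilde_box Hphi HY c Hc).
Qed.

End Filtration.

Theorem mainTheorem8 (M : nbhd_model) (Sigma : form -> Prop) :
  monotonic M -> transitive M -> subformula_closed Sigma ->
  @is_filtration M Sigma (supplementation (@boxT M Sigma)).
Proof.
  intros Hmon Htr [_ [_ Hbox]] phi Hphi.
  apply subset_antisym.
  - apply supplementation_least; intros Y HY.
    exact (boxT_subset_tilde_box M Sigma Hmon Htr (Hbox _ Hphi) HY).
  - intros c Hc.
    apply supplementation_extensive; left.
    exact (tilde_box_subset_boxMin M Sigma Hphi c Hc).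
Qed.
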